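(* Let $G=(V,E)$ be an almost tree (2). Then the diameter of the 1-skeleton of $\mathrm{CUT}(G)$ satisfies $$\left\lfloor \frac{|V|}{3}\right\rfloor \le d(\mathrm{CUT}(G)) \le |V|-1.$$
   Context: For an undirected graph $G=(V,E)$ and $S\subseteq V$, $\delta(S)\subseteq E$ denotes the set of edges with exactly one endpoint in $S$, and $\mathbf v(S)\in\{0,1\}^{E}$ is its incidence vector ($v(S)_e=1$ iff $e\in\delta(S)$). The cut polytope is $\mathrm{CUT}(G)=\operatorname{conv}\{\mathbf v(S):S\subseteq V\}\subset\mathbb R^{E}$. The 1-skeleton of a polytope is the graph whose vertices are the polytope's vertices and whose edges are its one-dimensional faces; $d(\cdot)$ denotes its diameter. A connected graph is an almost tree ($k$) if every biconnected component (maximal subgraph that remains connected after removal of any single vertex) has at most $k$ edges not belonging to a spanning tree of that component. *)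

From HB Require Import structures.
From mathcomp Require Import all_boot all_order all_algebra.
From mathcomp Require Import reals.
Set Implicit Arguments. Unset Strict Implicit. Unset Printing Implicit Defensive.
Import Order.TTheory GRing.Theory Num.Theory.
Local Open Scope ring_scope.

Section Graphs.
Variable T : finType.
Variable e : rel T.

Definition simple_graph : Prop := symmetric e /\ irreflexive e.

Definition edges : {set {set T}} := [set [set x; y] | x in T, y in T & e x y].

(* Connectivity of the subgraph induced on A (the empty graph counts as connected). *)
Definition induced_rel (A : {set T}) : rel T := [rel x y | [&& e x y, x \in A & y \in A]].
Definition connected_on (A : {set T}) : bool :=
  [forall x in A, forall y in A, connect (induced_rel A) x y].
Definition connected_graph : bool := connected_on setT.

Definition biconnected_on (B : {set T}) : bool :=
  connected_on B && [forall v in B, connected_on (B :\ v)].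

Definition biconnected_component (B : {set T}) : bool :=
  biconnected_on B && [forall B' : {set T}, (B \proper B') ==> ~~ biconnected_on B'].

Definition edges_in (B : {set T}) : {set {set T}} := [set f in edges | f \subset B].

(* Number of edges of the (connected) component B outside a spanning tree of it:
   |E(B)| - (|B| - 1). *)
Definition almost_tree (k : nat) : bool :=
  connected_graph &&
  [forall B : {set T}, biconnected_component B ==> (#|edges_in B| <= k + (#|B| - 1))%N].

Definition delta (S : {set T}) : {set {set T}} := [set f in edges | #|f :&: S| == 1%N].

(* Vertices of CUT(G) are the incidence vectors v(S); we identify v(S) with the edge set delta(S). *)
Definition is_cut (D : {set {set T}}) : Prop := exists S : {set T}, D = delta S.

(* Linear functional c : R^E applied to the incidence vector of D. *)
Definition dotc (R : realType) (c : {set T} -> R) (D : {set {set T}}) : R :=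
  \sum_(f in D) c f.

(* Two distinct vertices of CUT(G) are adjacent in the 1-skeleton iff some linear
   functional is maximized over the vertices of CUT(G) exactly at these two vertices,
   i.e. the face it exposes is the segment conv{v(D1), v(D2)} (a 1-dimensional face). *)
Definition cut_adj (R : realType) (D1 D2 : {set {set T}}) : Prop :=
  [/\ is_cut D1, is_cut D2, D1 <> D2 &
   exists c : {set T} -> R,
     dotc c D1 = dotc c D2 /\
     forall S : {set T}, dotc c (delta S) <= dotc c D1 /\
       (dotc c (delta S) = dotc c D1 -> delta S = D1 \/ delta S = D2)].

Definition skel_walk (R : realType) (k : nat) (D1 D2 : {set {set T}}) : Prop :=
  exists p : seq {set {set T}},
    [/\ size p = k, last D1 p = D2 &
        forall i, (i < k)%N -> cut_adj R (nth D1 (D1 :: p) i) (nth D1 (D1 :: p) i.+1)].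

Definition is_skel_diameter (R : realType) (d : nat) : Prop :=
  (forall D1 D2, is_cut D1 -> is_cut D2 -> exists2 k, (k <= d)%N & skel_walk R k D1 D2) /\
  (exists D1 D2, [/\ is_cut D1, is_cut D2 & forall k, (k < d)%N -> ~ skel_walk R k D1 D2]).

End Graphs.

From HB Require Import structures.
From mathcomp Require Import all_boot all_order all_algebra.
From mathcomp Require Import reals boolp.
From mathcomp Require Import zify lra.
Set Implicit Arguments. Unset Strict Implicit. Unset Printing Implicit Defensive.
Import GRing.Theory Num.Theory.

(* Two cuts [delta S] and [delta (symdiff S W)] are adjacent on CUT(G) exactly
   when [delta W] is a bond, i.e. [W] and its complement are both connected: a
   weight that ignores [delta W] and rewards [delta S] exposes the segment, and
   a disconnected [W] would split into two flips averaging to the maximum.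
   Upper bound: [delta S] reaches [delta (symdiff S U)] by bond flips, each of
   which strictly enlarges the component of a fixed vertex in the graph of the
   edges not cut by [U], so at most |V| - 1 flips are needed.
   Lower bound: in an almost tree (2) a bond has at most three edges, since a
   bond with four edges would sit in a biconnected subgraph with three edges
   beyond a spanning tree; and the edges of a maximum cut form a connected
   spanning subgraph, so it has at least |V| - 1 edges and lies at least
   (|V| - 1) / 3 >= |V| / 3 steps away from the empty cut. *)

Section SymDiff.
Variable T : finType.
Implicit Types A B C : {set T}.

Definition symdiff A B : {set T} := [set x | (x \in A) (+) (x \in B)].

Lemma in_symdiff A B x : (x \in symdiff A B) = (x \in A) (+) (x \in B).
Proof. by rewrite inE. Qed.

Lemma symdiffC A B : symdiff A B = symdiff B A.
Proof. by apply/setP => x; rewrite !in_symdiff addbC. Qed.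

Lemma symdiffvv A : symdiff A A = set0.
Proof. by apply/setP => x; rewrite in_symdiff inE addbb. Qed.

Lemma symdiffs0 A : symdiff A set0 = A.
Proof. by apply/setP => x; rewrite in_symdiff inE addbF. Qed.

Lemma symdiffK A B : symdiff A (symdiff A B) = B.
Proof. by apply/setP => x; rewrite !in_symdiff addKb. Qed.

Lemma symdiffsC A B : symdiff A (~: B) = ~: symdiff A B.
Proof. by apply/setP => x; rewrite !inE addbN. Qed.

Lemma symdiff_disjoint A B : A :&: B = set0 -> symdiff A B = A :|: B.
Proof.
move=> AB0; apply/setP => x; rewrite in_symdiff inE.
by have := in_set0 x; rewrite -AB0 inE; case: (x \in A) (x \in B) => [] [].
Qed.

Lemma symdiff_cancelr A B C : symdiff (symdiff A C) (symdiff B C) = symdiff A B.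
Proof.
by apply/setP => x; rewrite !in_symdiff; case: (x \in A) (x \in B) (x \in C) => [] [] [].
Qed.

Lemma card_symdiff_triangle A B C :
  (#|symdiff A C| <= #|symdiff A B| + #|symdiff B C|)%N.
Proof.
apply: leq_trans (leq_card_setU _ _); apply: subset_leq_card.
by apply/subsetP => x; rewrite !inE; case: (x \in A) (x \in B) (x \in C) => [] [] [].
Qed.

End SymDiff.

Section Connect.
Variable T : finType.
Implicit Types r : rel T.

Lemma connect_invariant (U : Type) r (f : T -> U) :
  (forall x y, r x y -> f x = f y) -> forall x y, connect r x y -> f x = f y.
Proof.
move=> rf x y /connectP [p pp ->]; elim: p x pp => [|z p IHp] x //= /andP [rxz pz].
by rewrite (rf _ _ rxz) (IHp z pz).
Qed.

Lemma connect_subrel r1 r2 : subrel r1 r2 -> subrel (connect r1) (connect r2).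
Proof. by move=> sr; apply: connect_sub => x y /sr /connect1. Qed.

Lemma connect_within_reach r x y : connect r x y ->
  connect [rel u v | [&& r u v, connect r x u & connect r x v]] x y.
Proof.
move=> /connectP [p pp ->]; elim/last_ind: p pp => [|p z IHp] //.
rewrite rcons_path last_rcons => /andP [rp rpz].
apply: connect_trans (IHp rp) (connect1 _).
have xp : connect r x (last x p) by apply/connectP; exists p.
by rewrite /= rpz xp (connect_trans xp (connect1 rpz)).
Qed.

End Connect.

Section Graph.
Variable T : finType.
Variable e : rel T.
Hypothesis esym : symmetric e.
Hypothesis eirr : irreflexive e.
Implicit Types (A B C H K P S U W X Y : {set T}) (a b r u v w x y z : T).

Lemma induced_sym A : symmetric (induced_rel e A).
Proof.
move=> x y; rewrite /induced_rel /= esym.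
by case: (x \in A) (y \in A) => [] []; rewrite ?andbF.
Qed.

Lemma connect_induced_sym A x y :
  connect (induced_rel e A) x y = connect (induced_rel e A) y x.
Proof. exact: sym_connect_sym (induced_sym A) x y. Qed.

Lemma connect_inducedS A B x y : A \subset B ->
  connect (induced_rel e A) x y -> connect (induced_rel e B) x y.
Proof.
move=> sAB; apply: connect_subrel => u v /and3P [euv uA vA].
by rewrite /induced_rel /= euv !(subsetP sAB).
Qed.

Lemma connect_induced_mem A x y : connect (induced_rel e A) x y -> x \in A -> y \in A.
Proof.
move=> cxy; rewrite (connect_invariant (f := fun z => z \in A) _ cxy) //.
by move=> u v /and3P [_ -> ->].
Qed.

Lemma connect_induced_exit A B u w : connect (induced_rel e A) u w ->
  u \in B -> w \notin B ->
  exists a b, [/\ connect (induced_rel e (A :&: B)) u a, a \in A :&: B,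
                  b \in A :\: B & e a b].
Proof.
move=> /connectP [p]; elim: p u => [|z p IHp] u /=; first by move=> _ -> ->.
case/andP=> /and3P [euz uA zA] pz lz uB wB.
case zB: (z \in B); last by exists u, z; rewrite !inE uA uB zA zB connect0.
have [a [b [cza aAB bAB eab]]] := IHp z pz lz zB wB.
exists a, b; split=> //; apply: connect_trans cza; apply: connect1.
by rewrite /induced_rel /= euz !inE uA zA uB zB.
Qed.

Lemma connected_onP A :
  reflect (forall x y, x \in A -> y \in A -> connect (induced_rel e A) x y)
          (connected_on e A).
Proof.
apply: (iffP forall_inP) => [cA x y xA yA|cA x xA].
  exact: (forall_inP (cA x xA)).
by apply/forall_inP => y; apply: cA.
Qed.

Lemma connected_on_from A r : r \in A ->
  (forall y, y \in A -> connect (induced_rel e A) r y) -> connected_on e A.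
Proof.
move=> rA cA; apply/connected_onP => x y xA yA.
by apply: connect_trans (cA y yA); rewrite connect_induced_sym; apply: cA.
Qed.

Lemma connected_on1 x : connected_on e [set x].
Proof. by apply/connected_onP => u v /set1P -> /set1P ->. Qed.

Lemma connected_onU A B a b : connected_on e A -> connected_on e B ->
  a \in A -> b \in B -> e a b -> connected_on e (A :|: B).
Proof.
move=> /connected_onP cA /connected_onP cB aA bB eab.
apply: (@connected_on_from _ a); first by rewrite inE aA.
move=> y /setUP [yA|yB]; first exact: connect_inducedS (subsetUl A B) (cA _ _ aA yA).
apply: (connect_trans (y := b)).
  by apply: connect1; rewrite /induced_rel /= eab !inE aA bB orbT.
exact: connect_inducedS (subsetUr A B) (cB _ _ bB yB).
Qed.

Lemma connected_component A x : x \in A ->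
  connected_on e [set y | connect (induced_rel e A) x y].
Proof.
move=> xA; apply: (@connected_on_from _ x); first by rewrite inE connect0.
move=> y; rewrite inE => /connect_within_reach; apply: connect_subrel.
by move=> u v /and3P [/and3P [euv _ _] cu cv]; rewrite /induced_rel /= euv !inE cu cv.
Qed.

(* A path towards [P] leaves [A :\: C :\: P] directly into [P], never into [C]. *)
Lemma connected_onD_closed A P C p : connected_on e A -> connected_on e P ->
  P \subset A -> p \in P -> C \subset A :\: P ->
  (forall x y, e x y -> x \in C -> y \in A :\: P -> y \in C) ->
  connected_on e (A :\: C).
Proof.
move=> /connected_onP cA /connected_onP cP sPA pP sCAP closedC.
have sPAC : P \subset A :\: C.
  apply/subsetP => x xP; rewrite inE (subsetP sPA) // andbT.
  by apply: contraL xP => /(subsetP sCAP) /setDP [].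
apply: (@connected_on_from _ p (subsetP sPAC p pP)) => y yAC.
rewrite connect_induced_sym.
have [yP|yP] := boolP (y \in P); first exact: connect_inducedS sPAC (cP _ _ yP pP).
have yA : y \in A by case/setDP: yAC.
set Q := (A :\: C) :\: P.
have yQ : y \in Q by rewrite inE yP yAC.
have pQ : p \notin Q by rewrite inE pP.
have [a [b [cya /setIP [_ aQ] /setDP [bA bQ] eab]]] :=
  connect_induced_exit (cA _ _ yA (subsetP sPA _ pP)) yQ pQ.
have [aP aAC] : a \notin P /\ a \in A :\: C by apply/andP; rewrite -in_setD.
have [aC aA] : a \notin C /\ a \in A by apply/andP; rewrite -in_setD.
have bC : b \notin C.
  by apply: contra aC => bC; apply: closedC bC _; rewrite 1?esym // inE aP aA.
have bP : b \in P by apply: contraR bQ => bP; rewrite !inE bP bC bA.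
have sQAC : A :&: Q \subset A :\: C by apply/subsetP => x /setIP [_ /setDP []].
apply: connect_trans (connect_inducedS sQAC cya) _.
apply: connect_trans (connect1 _) (connect_inducedS sPAC (cP _ _ bP pP)).
by rewrite /induced_rel /= eab aAC inE bC bA.
Qed.

Lemma edgesP f : reflect (exists x y, e x y /\ f = [set x; y]) (f \in edges e).
Proof.
apply: (iffP imset2P) => [[x y _ /[!inE] exy ->]|[x [y [exy ->]]]]; first by exists x, y.
by apply: (Imset2spec (x1 := x) (x2 := y)); rewrite ?inE.
Qed.

Lemma edge_neq x y : e x y -> x != y.
Proof. by apply: contraTneq => ->; rewrite eirr. Qed.

Lemma mem_delta_edge S x y : e x y ->
  ([set x; y] \in delta e S) = (x \in S) (+) (y \in S).
Proof.
move=> exy; have nxy := edge_neq exy.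
rewrite inE (_ : [set x; y] \in edges e); last by apply/edgesP; exists x, y.
have s1I z : [set z] :&: S = if z \in S then [set z] else set0.
  case: ifP => zS; first by apply/setIidPl; rewrite sub1set.
  by apply/setP => t; rewrite !inE; case: eqP => // ->; rewrite zS.
rewrite setIUl !s1I.
by case: (x \in S) (y \in S) => [] []; rewrite ?setU0 ?set0U ?cards1 ?cards0 ?cards2 ?nxy.
Qed.

Lemma delta_sub S : delta e S \subset edges e.
Proof. by apply/subsetP => f /setIdP []. Qed.

Lemma eq_delta A B :
  (forall x y, e x y -> (x \in A) (+) (y \in A) = (x \in B) (+) (y \in B)) ->
  delta e A = delta e B.
Proof.
move=> AB; apply/setP => f; case fE: (f \in edges e); last by rewrite !inE fE.
by case/edgesP: fE => x [y [exy ->]]; rewrite !mem_delta_edge // AB.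
Qed.

Lemma delta_symdiff A B : delta e (symdiff A B) = symdiff (delta e A) (delta e B).
Proof.
apply/setP => f; rewrite in_symdiff; case fE: (f \in edges e); last by rewrite !inE fE.
case/edgesP: fE => x [y [exy ->]]; rewrite !mem_delta_edge // !in_symdiff.
by case: (x \in A) (y \in A) (x \in B) (y \in B) => [] [] [] [].
Qed.

Lemma deltaC A : delta e (~: A) = delta e A.
Proof. by apply: eq_delta => x y _; rewrite !inE; case: (x \in A) (y \in A) => [] []. Qed.

Lemma delta0 : delta e set0 = set0.
Proof. by apply/setP => f; rewrite !inE setI0 cards0 andbF. Qed.

Lemma delta_neq0 A x y : connected_graph e -> x \in A -> y \notin A -> delta e A != set0.
Proof.
move=> /connected_onP cG xA yA; apply/eqP => dA0.
suff : (x \in A) = (y \in A) by rewrite xA (negbTE yA).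
apply: (connect_invariant (f := fun z => z \in A) _ (cG x y (in_setT _) (in_setT _))).
move=> u v /and3P [euv _ _].
by have := mem_delta_edge A euv; rewrite dA0 inE; case: (u \in A) (v \in A) => [] [].
Qed.

Lemma mem_edges_in_edge A x y : e x y ->
  ([set x; y] \in edges_in e A) = (x \in A) && (y \in A).
Proof.
move=> exy; rewrite inE subUset !sub1set.
by have -> : [set x; y] \in edges e by apply/edgesP; exists x, y.
Qed.

Lemma edges_inP A f : reflect (exists x y, [/\ e x y, f = [set x; y], x \in A & y \in A])
  (f \in edges_in e A).
Proof.
apply: (iffP idP) => [fA|[x [y [exy -> xA yA]]]]; last by rewrite mem_edges_in_edge ?xA.
have /edgesP [x [y [exy fE]]] : f \in edges e by case/setIdP: fA.
by exists x, y; move: fA; rewrite fE mem_edges_in_edge // => /andP [].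
Qed.

Lemma edges_inS A B : A \subset B -> edges_in e A \subset edges_in e B.
Proof.
move=> sAB; apply/subsetP => f /edges_inP [x [y [exy -> xA yA]]].
by rewrite mem_edges_in_edge // !(subsetP sAB).
Qed.

(* The cyclomatic number #|edges_in A| - #|A| + 1 of connected induced
   subgraphs is monotone: grow [H] inside [B] one neighbouring vertex at a time. *)
Lemma leq_card_edges_in_connected H B : H \subset B -> H != set0 ->
  connected_on e H -> connected_on e B ->
  (#|edges_in e H| + #|B| <= #|edges_in e B| + #|H|)%N.
Proof.
move BHn : #|B :\: H| => n.
elim: n H BHn => [|n IHn] H BHn sHB /set0Pn [x0 x0H] cH cB.
  suff -> : B = H by [].
  by apply/eqP; rewrite eqEsubset sHB -setD_eq0 -cards_eq0 BHn.
have [z /setDP [zB zH]] : exists z, z \in B :\: H by apply/set0Pn; rewrite -cards_eq0 BHn.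
have [a [b [_ /setIP [aB aH] /setDP [bB bH] eab]]] :=
  connect_induced_exit ((connected_onP _ cB) _ _ (subsetP sHB _ x0H) zB) x0H zH.
have cbH : connected_on e (b |: H).
  by rewrite setUC; apply: connected_onU cH (connected_on1 b) aH (set11 b) eab.
have sbHB : b |: H \subset B by rewrite subUset sub1set bB sHB.
have bHn : #|B :\: (b |: H)| = n.
  by rewrite setUC -setDDl; move: BHn; rewrite (cardsD1 b (B :\: H)) in_setD bH bB => -[].
have nbH : b |: H != set0 by apply/set0Pn; exists b; rewrite setU11.
have := IHn (b |: H) bHn sbHB nbH cbH cB.
have : (#|edges_in e H|.+1 <= #|edges_in e (b |: H)|)%N.
  have sub : [set a; b] |: edges_in e H \subset edges_in e (b |: H).
    rewrite subUset sub1set mem_edges_in_edge // !inE eqxx aH orbT /=.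
    by apply: edges_inS; apply: subsetUr.
  by have := subset_leq_card sub; rewrite cardsU1 mem_edges_in_edge // (negbTE bH) andbF.
rewrite cardsU1 bH add1n addnS => ltE le; rewrite -ltnS -addSn.
exact: leq_trans (leq_add ltE (leqnn _)) le.
Qed.

Lemma connected_card_edges_in A : connected_on e A ->
  (#|A| <= #|edges_in e A| + 1)%N.
Proof.
move=> cA; have [->|[x xA]] := set_0Vmem A; first by rewrite cards0.
have sxA : [set x] \subset A by rewrite sub1set.
have nx0 : [set x] != set0 by apply/set0Pn; exists x; rewrite set11.
have := leq_card_edges_in_connected sxA nx0 (connected_on1 x) cA.
by rewrite cards1; apply: leq_trans; apply: leq_addl.
Qed.

Lemma delta_symdiff_inj S A B :
  delta e (symdiff S A) = delta e (symdiff S B) -> delta e A = delta e B.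
Proof.
by rewrite !delta_symdiff => /(congr1 (symdiff (delta e S))); rewrite !symdiffK.
Qed.

Lemma delta_eq0_or_bond W Y : connected_on e W -> connected_on e (~: W) ->
  (forall x y, e x y -> (x \in W) = (y \in W) -> (x \in Y) = (y \in Y)) ->
  delta e Y = set0 \/ delta e Y = delta e W.
Proof.
move=> cW cWc sameY.
have side A : connected_on e A -> (forall x y, e x y -> x \in A -> y \in A ->
    (x \in Y) = (y \in Y)) -> Y :&: A = set0 \/ Y :&: A = A.
  move=> /connected_onP cA sameA; have [->|[w /setIP [wY wA]]] := set_0Vmem (Y :&: A).
    by left.
  right; apply/setIidPr/subsetP => z zA.
  rewrite -(connect_invariant (f := fun z => z \in Y) _ (cA w z wA zA)) //.
  by move=> u v /and3P [euv uA vA]; apply: sameA.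
have YW : Y :&: W = set0 \/ Y :&: W = W.
  by apply: side => // x y exy xW yW; apply: sameY; rewrite ?xW ?yW.
have YWc : Y :&: ~: W = set0 \/ Y :&: ~: W = ~: W.
  apply: side => // x y exy; rewrite !inE => xW yW.
  by apply: sameY; rewrite // (negbTE xW) (negbTE yW).
have -> : Y = Y :&: W :|: Y :&: ~: W by rewrite -setDE setID.
case: YW => ->; case: YWc => ->; rewrite ?set0U ?setU0 ?setUCr -?setC0 ?deltaC ?delta0;
  by [left | right].
Qed.

Definition bond4_within W X := [&& connected_on e (X :&: W), connected_on e (X :\: W)
  & (4 <= #|delta e W :&: edges_in e X|)%N].

Lemma bond4_withinC W X : bond4_within (~: W) X = bond4_within W X.
Proof. by rewrite /bond4_within deltaC [X :\: ~: W]setDE setCK -setDE andbCA. Qed.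

Lemma bond4_within_edge W X : bond4_within W X ->
  exists a b, [/\ e a b, a \in X, b \in X, a \in W & b \notin W].
Proof.
case/and3P => _ _ c4.
have /card_gt0P [f /setIP [fW /edges_inP [x [y [exy fE xX yX]]]]] :
  (0 < #|delta e W :&: edges_in e X|)%N := leq_trans (isT : 0 < 4)%N c4.
move: fW; rewrite fE mem_delta_edge //; case xW: (x \in W) => /= yW.
  by exists x, y.
by exists y, x; rewrite esym xW.
Qed.

Lemma bond4_within_card W X : bond4_within W X -> (#|X| + 2 <= #|edges_in e X|)%N.
Proof.
case/and3P => cXW cXW' c4.
set E1 := edges_in e (X :&: W); set E2 := edges_in e (X :\: W).
have dE12 : E1 :&: E2 = set0.
  apply/setP => f; rewrite inE [RHS]inE; apply/negP.
  case/andP => /edges_inP [x [y [_ -> /setIP [_ xW] _]]].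
  by rewrite inE => /andP [_ /subsetP /(_ x (setU11 _ _))]; rewrite in_setD xW.
have sE : E1 :|: E2 \subset edges_in e X :\: delta e W.
  apply/subsetP => f /setUP [] /edges_inP [x [y [exy -> xA yA]]];
    rewrite in_setD mem_delta_edge // mem_edges_in_edge //; move: xA yA.
    by rewrite !in_setI => /andP [-> ->] /andP [-> ->].
  by rewrite !in_setD => /andP [/negbTE -> ->] /andP [/negbTE -> ->].
have := subset_leq_card sE; rewrite cardsU dE12 cards0 subn0.
have := cardsID (delta e W) (edges_in e X); rewrite setIC in c4.
have := connected_card_edges_in cXW; have := connected_card_edges_in cXW'.
have := cardsID W X.
rewrite /E1 /E2; lia.
Qed.

Lemma bond4_within_setD W X C v : bond4_within W X -> v \in X -> v \in W ->
  C \subset W -> C \subset X :\ v ->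
  (forall x y, e x y -> x \in C -> y \in X :\ v -> y \in C) ->
  bond4_within W (X :\: C).
Proof.
case/and3P => cXW cXW' c4 vX vW sCW sCXv closedC.
apply/and3P; split.
- rewrite setIDAC; apply: (connected_onD_closed cXW (connected_on1 v)) (set11 v) _ _.
  + by rewrite sub1set inE vX vW.
  + apply/subsetP => u uC; have := subsetP sCXv u uC.
    by rewrite !inE (subsetP sCW u uC) => /andP [-> ->].
  + move=> x y exy xC; rewrite !inE => /andP [yv /andP [yX _]].
    by apply: closedC exy xC _; rewrite !inE yv yX.
- have -> : X :\: C :\: W = X :\: W.
    apply/setP => u; rewrite !inE; case uW: (u \in W); rewrite ?andbF //=.
    by have /contraFN -> := subsetP sCW u.
  exact: cXW'.
apply: leq_trans c4 (subset_leq_card _); apply/subsetP => f.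
case/setIP => fW /edges_inP [x [y [exy fE xX yX]]]; rewrite inE fW fE mem_edges_in_edge //.
have outC a b : e a b -> a \in X -> b \in X -> b \notin W -> (a \notin C) && (b \notin C).
  move=> eab aX bX bW; have bC : b \notin C by apply: contra bW; apply: (subsetP sCW).
  rewrite bC andbT; apply: contra bC => aC; apply: closedC eab aC _.
  by rewrite !inE bX andbT; apply: contraNneq bW => ->.
move: fW; rewrite fE mem_delta_edge // !in_setD xX yX !andbT.
case xW: (x \in W) => /= yW.
  by have /andP [-> ->] := outC x y exy xX yX yW.
have eyx : e y x by rewrite esym.
by have /andP [-> ->] := outC y x eyx yX xX (negbT xW).
Qed.

Lemma bond4_within_min_connected_setD1 W X v : bond4_within W X ->
  (forall X', bond4_within W X' -> (#|X| <= #|X'|)%N) ->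
  v \in X -> v \in W -> connected_on e (X :\ v).
Proof.
move=> bWX minX vX vW.
have [_ [b0 [_ _ b0X _ b0W]]] := bond4_within_edge bWX.
have /connected_onP cXW' : connected_on e (X :\: W) by case/and3P: bWX.
have sXWXv : X :\: W \subset X :\ v.
  apply/subsetP => u; rewrite !inE => /andP [uW ->]; rewrite andbT.
  by apply: contraNneq uW => ->.
have b0XW : b0 \in X :\: W by rewrite inE b0W b0X.
apply: (@connected_on_from _ b0); first exact: subsetP sXWXv _ b0XW.
move=> z zXv; rewrite connect_induced_sym; apply: contraT => nzb0.
set C := [set u | connect (induced_rel e (X :\ v)) z u].
have sCW : C \subset W.
  apply/subsetP => u; rewrite inE => czu; apply: contraT => uW.
  have uX : u \in X by case/setD1P: (connect_induced_mem czu zXv).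
  case/negP: nzb0; apply: (connect_trans czu); apply: connect_inducedS sXWXv _.
  by rewrite connect_induced_sym; apply: cXW'; rewrite // inE uW uX.
have sCXv : C \subset X :\ v.
  by apply/subsetP => u; rewrite inE => /connect_induced_mem; apply.
have closedC x y : e x y -> x \in C -> y \in X :\ v -> y \in C.
  move=> exy; rewrite [x \in C]inE [y \in C]inE => czx yXv.
  apply: (connect_trans czx); apply: connect1.
  by rewrite /induced_rel /= exy yXv (connect_induced_mem czx zXv).
have ltCX : (#|X :\: C| < #|X|)%N.
  apply: proper_card; apply/properP; split; first exact: subsetDl.
  by exists z; [case/setD1P: zXv | rewrite !inE connect0].
by have := minX _ (bond4_within_setD bWX vX vW sCW sCXv closedC); rewrite leqNgt ltCX.
Qed.

Lemma bond4_within_min_biconnected W X : bond4_within W X ->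
  (forall X', bond4_within W X' -> (#|X| <= #|X'|)%N) -> biconnected_on e X.
Proof.
move=> bWX minX; have [a [b [eab aX bX aW bW]]] := bond4_within_edge bWX.
apply/andP; split.
  case/and3P: bWX => cXW cXW' _; rewrite -(setID X W).
  by apply: connected_onU cXW cXW' _ _ eab; rewrite !inE ?aX ?aW ?bX ?bW.
apply/forall_inP => v vX; have [vW|vW] := boolP (v \in W).
  exact: bond4_within_min_connected_setD1 bWX minX vX vW.
apply: (@bond4_within_min_connected_setD1 (~: W)); rewrite ?bond4_withinC ?inE //.
by move=> X'; rewrite bond4_withinC; apply: minX.
Qed.

Lemma biconnected_component_sup X : biconnected_on e X ->
  exists2 B, biconnected_component e B & X \subset B.
Proof.
move=> biX.
have [B /andP [biB sXB] maxB] := arg_maxnP (fun B => #|B|)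
  (P := fun B => biconnected_on e B && (X \subset B)) (i0 := X)
  (introT andP (conj biX (subxx X))).
exists B => //; rewrite /biconnected_component biB; apply/forallP => B'.
apply/implyP => ltBB'; apply: contraL (proper_card ltBB') => biB'.
by rewrite -leqNgt; apply: maxB; rewrite biB' (subset_trans sXB (proper_sub ltBB')).
Qed.

Lemma bond_card_le3 W : almost_tree e 2 -> connected_on e W -> connected_on e (~: W) ->
  (#|delta e W| <= 3)%N.
Proof.
move=> /andP [_ /forallP atB] cW cWc; rewrite leqNgt; apply/negP => big.
have bT : bond4_within W setT.
  rewrite /bond4_within setTI setTD cW cWc (setIidPl _) //.
  by apply/subsetP => f fW; rewrite inE subsetT andbT (subsetP (delta_sub W)).
have [X bWX minX] := arg_minnP (fun X => #|X|) bT.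
have biX := bond4_within_min_biconnected bWX minX; have /andP [cX _] := biX.
have [B compB sXB] := biconnected_component_sup biX.
have /andP [/andP [cB _] _] := compB.
have [a [_ [_ aX _ _ _]]] := bond4_within_edge bWX.
have nX0 : X != set0 by apply/set0Pn; exists a.
have grow := leq_card_edges_in_connected sXB nX0 cX cB.
have cyclB := implyP (atB B) compB; have cyclX := bond4_within_card bWX.
have B0 : (0 < #|B|)%N by apply/card_gt0P; exists a; apply: (subsetP sXB).
clear -grow cyclB cyclX B0; lia.
Qed.

Variable R : realType.
Implicit Types c : {set T} -> R.
Local Open Scope ring_scope.

Lemma dotcE c D : dotc c D = \sum_f (if f \in D then c f else 0).
Proof. by rewrite /dotc big_mkcond. Qed.

Lemma dotc_delta_split c S W W1 : W1 \subset W ->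
  (forall x y, e x y -> x \in W1 -> y \in W -> y \in W1) ->
  dotc c (delta e (symdiff S W1)) + dotc c (delta e (symdiff S (W :\: W1))) =
  dotc c (delta e S) + dotc c (delta e (symdiff S W)).
Proof.
move=> sW1W closedW1; rewrite !dotcE -!big_split /=; apply: eq_bigr => f _.
case fE: (f \in edges e); last by rewrite !inE fE.
case/edgesP: fE => x [y [exy ->]]; rewrite !mem_delta_edge // !in_symdiff !in_setD.
have : [&& (x \in W1) ==> (x \in W), (y \in W1) ==> (y \in W),
    (x \in W1) && (y \in W) ==> (y \in W1) & (y \in W1) && (x \in W) ==> (x \in W1)].
  apply/and4P; split; apply/implyP; try exact: (subsetP sW1W).
    by case/andP; apply: closedW1.
  by case/andP; apply: closedW1; rewrite esym.
case: (x \in W1) (y \in W1) (x \in W) (y \in W) => [] [] [] [] //= _;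
  by case: (x \in S) (y \in S) => [] []; rewrite /= ?addr0 ?add0r.
Qed.

(* The weight exposing the segment between [delta S] and [delta (symdiff S W)]:
   it ignores the bond [delta W] and is maximised elsewhere exactly by [delta S]. *)
Definition flip_weight S W f : R :=
  if f \in delta e W then 0 else if f \in delta e S then 1 else -1.

Lemma flip_weight_term_le S W X f :
  (if f \in delta e X then flip_weight S W f else 0) <=
  (if f \in delta e S then flip_weight S W f else 0).
Proof.
rewrite /flip_weight; case: (f \in delta e W); first by case: ifP; case: ifP.
by case: (f \in delta e X) (f \in delta e S) => [] []; rewrite ?lexx ?ler01 ?lerN10.
Qed.

Lemma dotc_flip_weight_le S W X :
  dotc (flip_weight S W) (delta e X) <= dotc (flip_weight S W) (delta e S).
Proof. by rewrite !dotcE; apply: ler_sum => f _; apply: flip_weight_term_le. Qed.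

Lemma dotc_flip_weight_eq S W X :
  dotc (flip_weight S W) (delta e X) = dotc (flip_weight S W) (delta e S) ->
  forall f, f \notin delta e W -> (f \in delta e X) = (f \in delta e S).
Proof.
move=> eqX f fW.
have eq0 : \sum_g ((if g \in delta e S then flip_weight S W g else 0) -
    (if g \in delta e X then flip_weight S W g else 0)) = 0.
  by rewrite sumrB -!dotcE eqX subrr.
have term_ge0 g : true -> 0 <= (if g \in delta e S then flip_weight S W g else 0) -
    (if g \in delta e X then flip_weight S W g else 0).
  by rewrite subr_ge0 flip_weight_term_le.
have /eqP := psumr_eq0P term_ge0 eq0 (i := f) isT.
rewrite subr_eq0 /flip_weight (negbTE fW).
by case: (f \in delta e S) (f \in delta e X) => [] [] /=;
  rewrite // ?(eq_sym 0) ?oppr_eq0 ?oner_eq0.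
Qed.

Lemma dotc_flip_weight_symdiff S W :
  dotc (flip_weight S W) (delta e (symdiff S W)) = dotc (flip_weight S W) (delta e S).
Proof.
rewrite !dotcE; apply: eq_bigr => f _; rewrite delta_symdiff in_symdiff /flip_weight.
by case: (f \in delta e W) (f \in delta e S) => [] [].
Qed.

Lemma cut_adj_flip_bond S W w0 w1 : connected_graph e ->
  connected_on e W -> connected_on e (~: W) -> w0 \in W -> w1 \notin W ->
  cut_adj e R (delta e S) (delta e (symdiff S W)).
Proof.
move=> cG cW cWc w0W w1W.
split; [by exists S | by exists (symdiff S W) | | exists (flip_weight S W)].
  rewrite -{1}(symdiffs0 S) => /delta_symdiff_inj; rewrite delta0 => dW0.
  by move: (delta_neq0 cG w0W w1W); rewrite -dW0 eqxx.
split=> [|X]; first by rewrite dotc_flip_weight_symdiff.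
split=> [|/dotc_flip_weight_eq same]; first exact: dotc_flip_weight_le.
have sides x y : e x y -> (x \in W) = (y \in W) ->
    (x \in symdiff S X) = (y \in symdiff S X).
  move=> exy xyW; have := same [set x; y].
  rewrite !mem_delta_edge // xyW addbb !in_symdiff => /(_ isT).
  by case: (x \in S) (y \in S) (x \in X) (y \in X) => [] [] [] [].
have [dSX|dSX] := delta_eq0_or_bond cW cWc sides; [left|right].
  by rewrite -(symdiffK S X) delta_symdiff dSX symdiffs0.
by rewrite -(symdiffK S X) delta_symdiff dSX -delta_symdiff.
Qed.

(* If [W] splits into [W1] and [W :\: W1] with no edge in between, the flips
   across the two halves average to the maximum, so both are maximisers. *)
Lemma cut_adj_flip_connected S W : connected_graph e ->
  cut_adj e R (delta e S) (delta e (symdiff S W)) -> connected_on e W.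
Proof.
move=> cG [_ _ _ [c [eqSW maxS]]]; apply/connected_onP => x y xW yW.
apply: contraT => nxy; exfalso.
set W1 := [set z | connect (induced_rel e W) x z].
have sW1W : W1 \subset W.
  by apply/subsetP => z; rewrite inE => /connect_induced_mem; apply.
have closedW1 u v : e u v -> u \in W1 -> v \in W -> v \in W1.
  rewrite !inE => euv cxu vW; apply: (connect_trans cxu (connect1 _)).
  by rewrite /induced_rel /= euv vW (connect_induced_mem cxu xW).
have xW1 : x \in W1 by rewrite inE connect0.
have yW1 : y \notin W1 by rewrite inE.
have split := dotc_delta_split c S sW1W closedW1.
have le1 := (maxS (symdiff S W1)).1; have le2 := (maxS (symdiff S (W :\: W1))).1.
have /(maxS (symdiff S W1)).2 [] : dotc c (delta e (symdiff S W1)) = dotc c (delta e S).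
- by lra.
- rewrite -{2}(symdiffs0 S) => /delta_symdiff_inj; rewrite delta0 => /eqP.
  by apply/negP; apply: delta_neq0 cG xW1 yW1.
move=> /delta_symdiff_inj dW1.
have WW1 : W :\: W1 = symdiff W1 W.
  apply/setP => z; rewrite in_setD in_symdiff.
  by case: (boolP (z \in W1)) => [/(subsetP sW1W) ->|].
have yW2 : y \in W :\: W1 by rewrite inE yW1 yW.
have xW2 : x \notin W :\: W1 by rewrite inE xW1.
by have := delta_neq0 cG yW2 xW2; rewrite WW1 delta_symdiff dW1 symdiffvv eqxx.
Qed.

Lemma cut_adj_card_symdiff D1 D2 : almost_tree e 2 -> cut_adj e R D1 D2 ->
  (#|symdiff D1 D2| <= 3)%N.
Proof.
move=> aT adj; have cG : connected_graph e by case/andP: aT.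
case: (adj) => [[S D1E] [S' D2E] _ _]; rewrite {}D1E {}D2E -(symdiffK S S') in adj *.
set W := symdiff S S' in adj *.
have cWc : connected_on e (~: W).
  by apply: (@cut_adj_flip_connected S); rewrite // symdiffsC deltaC.
rewrite delta_symdiff symdiffK.
exact: bond_card_le3 aT (cut_adj_flip_connected cG adj) cWc.
Qed.

Lemma skel_walk0 D : skel_walk e R 0 D D.
Proof. by exists [::]. Qed.

Lemma skel_walk_cons D0 D1 D2 k : cut_adj e R D0 D1 -> skel_walk e R k D1 D2 ->
  skel_walk e R k.+1 D0 D2.
Proof.
move=> a01 [p [sp lp adjp]]; exists (D1 :: p); split=> //=; first by rewrite sp.
case=> [|i] //= ik; have := adjp i ik.
rewrite (set_nth_default D1 D0 (s := D1 :: p)) /= ?sp 1?ltnW //.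
by rewrite (set_nth_default D1 D0 (s := p)) ?sp.
Qed.

Lemma skel_walk_card_symdiff k D1 D2 : almost_tree e 2 -> skel_walk e R k D1 D2 ->
  (#|symdiff D1 D2| <= 3 * k)%N.
Proof.
move=> aT [p [sp lp adjp]].
suff bound i : (i <= k)%N -> (#|symdiff D1 (nth D1 (D1 :: p) i)| <= 3 * i)%N.
  by rewrite -lp (last_nth D1) sp; apply: bound.
elim: i => [|i IHi] ik; first by rewrite symdiffvv cards0.
apply: leq_trans (card_symdiff_triangle _ (nth D1 (D1 :: p) i) _) _.
rewrite mulnSr leq_add ?(IHi (ltnW ik)) //.
exact: cut_adj_card_symdiff aT (adjp i ik).
Qed.

Definition uncut_rel U : rel T := [rel x y | e x y && ((x \in U) == (y \in U))].

Definition uncut_component U r : {set T} := [set z | connect (uncut_rel U) r z].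

Lemma mem_uncut_component U r : r \in uncut_component U r.
Proof. by rewrite inE connect0. Qed.

Lemma uncut_component_setT U r : uncut_component U r = setT -> delta e U = set0.
Proof.
move=> AT; have sameU z : (z \in U) = (r \in U).
  have : z \in uncut_component U r by rewrite AT inE.
  rewrite inE => crz; symmetry; apply: (connect_invariant (f := fun z => z \in U) _ crz).
  by move=> u v /andP [_ /eqP].
by rewrite -delta0; apply: eq_delta => x y _; rewrite sameU [y \in U]sameU addbb !in_set0.
Qed.

Lemma connected_uncut_component U r : connected_on e (uncut_component U r).
Proof.
apply: (connected_on_from (mem_uncut_component U r)) => y.
rewrite inE => /connect_within_reach; apply: connect_subrel.
by move=> u v /and3P [/andP [euv _] cu cv]; rewrite /induced_rel /= euv !inE cu cv.
Qed.

Lemma uncut_componentS U K r : [disjoint uncut_component U r & K] ->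
  uncut_component U r \subset uncut_component (symdiff U K) r.
Proof.
move=> dAK; apply/subsetP => x; rewrite !inE => /connect_within_reach.
apply: connect_subrel => u v /and3P [/andP [euv Uuv] cu cv].
have uK : u \in K = false by apply: disjointFr dAK _; rewrite inE.
have vK : v \in K = false by apply: disjointFr dAK _; rewrite inE.
by rewrite /uncut_rel /= euv !in_symdiff uK vK !addbF.
Qed.

(* [K] is the component of the complement entered by a cut edge [ab]; flipping
   [K] uncuts [ab]. *)
Lemma uncut_component_grow U r : connected_graph e -> uncut_component U r != setT ->
  exists K, [/\ connected_on e K, connected_on e (~: K), K != set0, r \notin K &
    uncut_component U r \proper uncut_component (symdiff U K) r].
Proof.
move=> cG; set A := uncut_component U r => nAT.
have rA : r \in A := mem_uncut_component U r.
have /subsetPn [z _ zA] : ~~ ([set: T] \subset A) by rewrite subTset.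
have [a [b [_ /setIP [_ aA] /setDP [_ bA] eab]]] :=
  connect_induced_exit ((connected_onP _ cG) r z (in_setT r) (in_setT z)) rA zA.
set K := [set y | connect (induced_rel e (~: A)) b y].
have bK : b \in K by rewrite inE connect0.
have sKA : K \subset ~: A.
  by apply/subsetP => y; rewrite inE => /connect_induced_mem; apply; rewrite inE.
have dAK : [disjoint A & K] by rewrite disjoint_sym disjoints_subset.
have cutab : (a \in U) != (b \in U).
  apply: contra bA => Uab; rewrite inE; apply: (connect_trans (y := a)).
    by rewrite inE in aA.
  by apply: connect1; rewrite /uncut_rel /= eab.
exists K; split.
- by apply: connected_component; rewrite inE.
- rewrite -setTD; apply: (connected_onD_closed cG (connected_uncut_component U r)) rA _ _.
  + exact: subsetT.
  + by rewrite setTD.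
  move=> x y exy; rewrite [x \in K]inE [y \in K]inE in_setD in_setT andbT => cbx yA.
  have xA : x \in ~: A by apply: connect_induced_mem cbx _; rewrite in_setC.
  apply: (connect_trans cbx); apply: connect1.
  by rewrite /induced_rel /= exy xA in_setC yA.
- by apply/set0Pn; exists b.
- by rewrite (disjointFr dAK rA).
apply/properP; split; first exact: uncut_componentS.
exists b => //; rewrite inE; apply: (connect_trans (y := a)).
  by have := subsetP (uncut_componentS dAK) a aA; rewrite inE.
apply: connect1; rewrite /uncut_rel /= eab !in_symdiff bK (disjointFr dAK aA) addbF addbT.
by move: cutab; case: (a \in U) (b \in U).
Qed.

Lemma skel_walk_flip m U S r : connected_graph e ->
  (#|T| - #|uncut_component U r| <= m)%N ->
  exists2 k, (k <= m)%N & skel_walk e R k (delta e S) (delta e (symdiff S U)).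
Proof.
move=> cG; elim: m U S => [|m IHm] U S leAm;
    have [AT|nAT] := eqVneq (uncut_component U r) setT;
    try by exists 0%N; rewrite // delta_symdiff (uncut_component_setT AT) symdiffs0;
           apply: skel_walk0.
  by case/negP: nAT; rewrite eqEcard subsetT cardsT -subn_eq0 -leqn0.
have [K [cK cKc /set0Pn [k0 k0K] rK ltAA']] := uncut_component_grow cG nAT.
have [|k km walk] := IHm (symdiff U K) (symdiff S K).
  by have := proper_card ltAA'; have := max_card (uncut_component (symdiff U K) r); lia.
exists k.+1 => //; rewrite symdiff_cancelr in walk.
exact: skel_walk_cons (cut_adj_flip_bond S cG cK cKc k0K rK) walk.
Qed.

Lemma skel_walk_le_card D1 D2 : connected_graph e -> is_cut e D1 -> is_cut e D2 ->
  exists2 k, (k <= #|T| - 1)%N & skel_walk e R k D1 D2.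
Proof.
move=> cG [S1 ->] [S2 ->]; rewrite -(symdiffK S1 S2).
have [r _|T0] := pickP (@predT T).
  apply: (skel_walk_flip (r := r) _ cG); apply: leq_sub2l.
  by apply/card_gt0P; exists r; apply: mem_uncut_component.
have -> : symdiff S1 S2 = set0 by apply/setP => x; have := T0 x.
by exists 0%N; rewrite // symdiffs0; apply: skel_walk0.
Qed.

End Graph.

Section MaxCut.
Variable T : finType.
Variable e : rel T.
Hypothesis esym : symmetric e.
Hypothesis eirr : irreflexive e.
Implicit Types U : {set T}.

Definition cut_rel U : rel T := [rel x y | e x y && ((x \in U) != (y \in U))].

Lemma cut_rel_sym U : symmetric (cut_rel U).
Proof. by move=> x y; rewrite /cut_rel /= esym eq_sym. Qed.

(* Flipping a component [K] of the cut edges of [U] adds the nonempty cut of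
   [K] to that of [U], since no edge leaving [K] is cut by [U]. *)
Lemma max_cut_connected U : connected_graph e ->
  (forall U', #|delta e U'| <= #|delta e U|)%N -> connected_graph (cut_rel U).
Proof.
move=> cG maxU; apply/connected_onP => x y _ _; apply: contraT => nxy.
set K := [set z | connect (induced_rel (cut_rel U) setT) x z].
have xK : x \in K by rewrite inE connect0.
have yK : y \notin K by rewrite inE.
have cutK a b : e a b -> a \in K -> (a \in U) != (b \in U) -> b \in K.
  move=> eab; rewrite !inE => cxa Uab; apply: (connect_trans cxa); apply: connect1.
  by rewrite /induced_rel /cut_rel /= eab Uab !inE.
have dKU : delta e U :&: delta e K = set0.
  apply/setP => f; rewrite inE [RHS]inE; apply/negP => /andP [fU fK].
  have /edgesP [a [b [eab fE]]] := subsetP (delta_sub e U) f fU.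
  move: fU fK; rewrite fE !mem_delta_edge // -!negb_eqb => Uab.
  have Uba : (b \in U) != (a \in U) by rewrite eq_sym.
  have eba : e b a by rewrite esym.
  case aK: (a \in K); case bK: (b \in K) => //= _.
    by move: (cutK a b eab aK Uab); rewrite bK.
  by move: (cutK b a eba bK Uba); rewrite aK.
have := maxU (symdiff U K); rewrite delta_symdiff // symdiff_disjoint // cardsU dKU.
rewrite cards0 subn0 -[leqRHS]addn0 leq_add2l leqn0 cards_eq0.
by rewrite (negbTE (delta_neq0 eirr cG xK yK)).
Qed.

Lemma max_cut_card : connected_graph e -> exists U, (#|T| - 1 <= #|delta e U|)%N.
Proof.
move=> cG.
have [U _ maxU] := arg_maxnP (fun U => #|delta e U|) (P := xpredT) (i0 := set0) isT.
exists U; have cU := max_cut_connected cG (fun U' => maxU U' isT).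
have sub : edges_in (cut_rel U) setT \subset delta e U.
  apply/subsetP => f /edges_inP [a [b [/andP [eab Uab] -> _ _]]].
  by rewrite mem_delta_edge // -negb_eqb.
rewrite leq_subLR addnC -cardsT.
apply: leq_trans (connected_card_edges_in (cut_rel_sym U) cU) _.
by rewrite leq_add2r subset_leq_card.
Qed.

End MaxCut.

Theorem theorem6 (R : realType) (T : finType) (e : rel T) :
  simple_graph e -> almost_tree e 2 ->
  exists d : nat, is_skel_diameter e R d /\ (#|T| %/ 3 <= d <= #|T| - 1)%N.
Proof.
move=> [esym eirr] aT; have cG : connected_graph e by case/andP: aT.
pose far j := exists D1 D2, [/\ is_cut e D1, is_cut e D2 &
  forall k, (k < j)%N -> ~ skel_walk e R k D1 D2].
have far_le j : far j -> (j <= #|T| - 1)%N.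
  move=> [D1 [D2 [cut1 cut2 nowalk]]].
  have [k le_k walk] := skel_walk_le_card esym eirr R cG cut1 cut2.
  by rewrite leqNgt; apply/negP => /(leq_ltn_trans le_k) /nowalk.
have far_n3 : far (#|T| %/ 3)%N.
  have [U leU] := max_cut_card esym eirr cG.
  exists (delta e set0), (delta e U); split; [by exists set0 | by exists U |].
  move=> k lt_k /(skel_walk_card_symdiff esym eirr aT).
  by rewrite delta0 // symdiffC symdiffs0; lia.
have [d /asboolW far_d max_d] := ex_maxnP (P := fun j => `[< far j >])
  (ex_intro _ (#|T| %/ 3)%N (asboolT far_n3)) (fun j fj => far_le j (asboolW fj)).
exists d; split; last by rewrite max_d ?asboolT // far_le.
split=> // D1 D2 cut1 cut2.
have [//|nowalk] := pselect (exists2 k, (k <= d)%N & skel_walk e R k D1 D2).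
suff /asboolT /max_d : far d.+1 by rewrite ltnn.
by exists D1, D2; split=> // k lt_k walk; apply: nowalk; exists k.
Qed.
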